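(* Let $G = N \rtimes H$ with $N,H$ finite abelian, let $\mathcal{O}_\alpha$ be an $H$-orbit in $P_N$ with stabilizer $H_\alpha$ and $c_\alpha = |\mathcal{O}_\alpha| = [H:H_\alpha]$, and let $u_p$ be an element of the idempotent eigenbasis of $\mathbb{C}[H_\alpha]$. Fix $v_1 \in \mathcal{O}_\alpha$, choose representatives $h_1,\dots,h_{c_\alpha}$ of the cosets of $H_\alpha$ in $H$, put $v_i = h_iv_1h_i^{-1}$ (so $\mathcal{O}_\alpha = \{v_1,\dots,v_{c_\alpha}\}$), $w_i = v_iu_p$, and $e_{ij} = w_i h_ih_j^{-1} w_j$. Then $e_{ij}e_{jk} = e_{ik}$, $e_{ij}e_{kl}=0$ for $j\ne k$, and $e_{ij}\mapsto E_{ij}$ defines an algebra isomorphism of the block $A = \mathbb{C}[G]J^{[\alpha]}_p$, where $J^{[\alpha]}_p = \sum_{i=1}^{c_\alpha} w_i$, with $\mathbb{M}_{c_\alpha}(\mathbb{C})$.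
   Context: $N$ is normal in $G$, $H$ acts on $N$ by conjugation. For a finite abelian group $K$, the idempotent eigenbasis of $\mathbb{C}[K]$ is the unique basis of $\mathbb{C}[K]$ consisting of simultaneous eigenvectors of left multiplication by elements of $\mathbb{C}[K]$ and consisting of pairwise orthogonal idempotents. $P_N$ is the idempotent eigenbasis of $\mathbb{C}[N]$, permuted by conjugation by $H$; $H_\alpha$ is the common stabilizer of the elements of $\mathcal{O}_\alpha$. $E_{ij}$ is the elementary $c_\alpha\times c_\alpha$ matrix with $1$ in position $(i,j)$. *)

From HB Require Import structures.
From mathcomp Require Import all_boot all_order all_algebra all_fingroup all_solvable all_field.
Set Implicit Arguments. Unset Strict Implicit. Unset Printing Implicit Defensive.
Import GRing.Theory Num.Theory.
Local Open Scope ring_scope.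

(* The complex group algebra of the ambient finite group gT, realised as
   functions gT -> algC; C[K] for K : {set gT} is the subspace of functions
   supported in K. *)
Definition galg (gT : finGroupType) := {ffun gT -> algC^o}.

Definition gdelta (gT : finGroupType) (g : gT) : galg gT :=
  [ffun x => (x == g)%:R].

Definition gmul (gT : finGroupType) (a b : galg gT) : galg gT :=
  [ffun g => \sum_(x : gT) a x * b (x^-1 * g)%g].

Definition in_galg (gT : finGroupType) (K : {set gT}) (a : galg gT) : Prop :=
  forall g, g \notin K -> a g = 0.

Definition gconj (gT : finGroupType) (h : gT) (a : galg gT) : galg gT :=
  gmul (gmul (gdelta h) a) (gdelta h^-1%g).

Definition idem_eigenbasis (gT : finGroupType) (K : {set gT}) (B : seq (galg gT)) : Prop :=
  [/\ uniq B,
      forall b, b \in B -> in_galg K b,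
      (
      forall c : 'I_(size B) -> algC,
        \sum_(i < size B) c i *: B`_i = 0 -> forall i, c i = 0) /\
      (forall a, in_galg K a -> exists c : 'I_(size B) -> algC,
        a = \sum_(i < size B) c i *: B`_i),
      forall b x, b \in B -> in_galg K x -> exists l : algC, gmul x b = l *: b
    & (forall b, b \in B -> gmul b b = b)
    /\ (forall b b', b \in B -> b' \in B -> b != b' -> gmul b b' = 0)].

(* Write w = v1 u, the product of a primitive idempotent v1 of C[N] and a
   primitive idempotent u of C[H_a], H_a the stabiliser of v1 in H.  Since H
   is abelian, u commutes with H, so the elements of the paper are
   w_i = h_i w h_i^-1 and e_ij = h_i w h_j^-1.  Two facts drive everything:
   - w h w = 0 for h in H \ H_a, because h v1 h^-1 is then a primitive
     idempotent of the commutative algebra C[N] distinct from v1, hence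
     orthogonal to it; this gives the multiplication table of the e_ij;
   - for g in G, g e_ii is a multiple of some e_ki (decompose g = n h and
     h h_i = h_k s with s in H_a), so the block C[G] J, J = sum_i e_ii, is
     the span of the e_ij. *)
From HB Require Import structures.
From mathcomp Require Import all_boot all_order all_algebra all_fingroup all_solvable all_field.
Import GRing.Theory Num.Theory.
Set Implicit Arguments. Unset Strict Implicit.
Local Open Scope ring_scope.

Section GroupAlgebra.
Variable gT : finGroupType.
Implicit Types (a b c : galg gT) (x y g h : gT).

Lemma scaleCE (k x : algC) : k *: (x : algC^o) = k * x.
Proof. by []. Qed.

Lemma gmulE a b g : gmul a b g = \sum_x a x * b (x^-1 * g)%g.
Proof. by rewrite ffunE. Qed.

Lemma gdeltaE x g : gdelta x g = (g == x)%:R.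
Proof. by rewrite ffunE. Qed.

Lemma gmul_deltal x a : gmul (gdelta x) a = [ffun g => a (x^-1 * g)%g].
Proof.
apply/ffunP=> g; rewrite !ffunE (bigD1 x) //= big1 => [|y /negbTE yx].
  by rewrite gdeltaE eqxx mul1r addr0.
by rewrite gdeltaE yx mul0r.
Qed.

Lemma gmul_deltar a x : gmul a (gdelta x) = [ffun g => a (g * x^-1)%g].
Proof.
apply/ffunP=> g; rewrite !ffunE (bigD1 (g * x^-1)%g) //= big1 => [|y yx].
  by rewrite gdeltaE invMg invgK mulgKV eqxx mulr1 addr0.
rewrite gdeltaE; case: eqP => [E|]; last by rewrite mulr0.
by move: yx; rewrite -E invMg invgK mulKVg eqxx.
Qed.

Lemma gdeltaM x y : gmul (gdelta x) (gdelta y) = gdelta (x * y)%g.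
Proof.
rewrite gmul_deltal; apply/ffunP=> g; rewrite !ffunE; congr (_%:R).
by rewrite -(inj_eq (mulgI x)) mulKVg.
Qed.

Lemma gmul1l a : gmul (gdelta 1%g) a = a.
Proof. by rewrite gmul_deltal; apply/ffunP=> g; rewrite ffunE invg1 mul1g. Qed.

Lemma gmul1r a : gmul a (gdelta 1%g) = a.
Proof. by rewrite gmul_deltar; apply/ffunP=> g; rewrite ffunE invg1 mulg1. Qed.

Lemma gmulA a b c : gmul (gmul a b) c = gmul a (gmul b c).
Proof.
apply/ffunP=> g; rewrite !ffunE.
under eq_bigr => y _ do rewrite ffunE mulr_suml.
rewrite exchange_big /=; apply: eq_bigr => x _.
rewrite ffunE mulr_sumr (reindex_inj (mulgI x)) /=.
by apply: eq_bigr => z _; rewrite mulKg invMg mulgA mulrA.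
Qed.

Lemma gdeltaMA x y a : gmul (gdelta x) (gmul (gdelta y) a) = gmul (gdelta (x * y)%g) a.
Proof. by rewrite -gmulA gdeltaM. Qed.

Lemma gmulDl a b c : gmul (a + b) c = gmul a c + gmul b c.
Proof.
apply/ffunP=> g; rewrite !ffunE -big_split; apply: eq_bigr => x _.
by rewrite ffunE mulrDl.
Qed.

Lemma gmulDr a b c : gmul a (b + c) = gmul a b + gmul a c.
Proof.
apply/ffunP=> g; rewrite !ffunE -big_split; apply: eq_bigr => x _.
by rewrite ffunE mulrDr.
Qed.

Lemma gmulZl k a b : gmul (k *: a) b = k *: gmul a b.
Proof.
apply/ffunP=> g; rewrite !ffunE scaler_sumr; apply: eq_bigr => x _.
by rewrite ffunE scalerAl.
Qed.

Lemma gmulZr k a b : gmul a (k *: b) = k *: gmul a b.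
Proof.
apply/ffunP=> g; rewrite !ffunE scaler_sumr; apply: eq_bigr => x _.
by rewrite ffunE scalerAr.
Qed.

Lemma gmul0l a : gmul 0 a = 0.
Proof. by apply/ffunP=> g; rewrite !ffunE big1 // => x _; rewrite ffunE mul0r. Qed.

Lemma gmul0r a : gmul a 0 = 0.
Proof. by apply/ffunP=> g; rewrite !ffunE big1 // => x _; rewrite ffunE mulr0. Qed.

Lemma gmul_suml I r (P : pred I) F b :
  gmul (\sum_(i <- r | P i) F i) b = \sum_(i <- r | P i) gmul (F i) b.
Proof.
by apply: (big_morph (fun a => gmul a b)); [move=> ??; exact: gmulDl | exact: gmul0l].
Qed.

Lemma gmul_sumr I r (P : pred I) F b :
  gmul b (\sum_(i <- r | P i) F i) = \sum_(i <- r | P i) gmul b (F i).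
Proof.
by apply: (big_morph (fun a => gmul b a)); [move=> ??; exact: gmulDr | exact: gmul0r].
Qed.

Lemma sum_galgE I r (P : pred I) (F : I -> galg gT) g :
  (\sum_(i <- r | P i) F i) g = \sum_(i <- r | P i) F i g.
Proof.
by apply: (big_morph (fun a : galg gT => a g)); [move=> ??; rewrite ffunE | rewrite ffunE].
Qed.

Lemma galg_neq0 a : a != 0 -> exists g, a g != 0.
Proof.
move=> a0; apply/existsP; apply: contraR a0 => /existsPn a0g.
by apply/eqP/ffunP=> g; rewrite ffunE; apply/eqP; rewrite -[_ == _]negbK a0g.
Qed.

Lemma in_galg_mul (K : {group gT}) a b :
  in_galg K a -> in_galg K b -> in_galg K (gmul a b).
Proof.
move=> Ka Kb g gK; rewrite ffunE big1 // => x _.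
case xK: (x \in K); last by rewrite Ka ?xK ?mul0r.
by rewrite Kb ?mulr0 // groupMl ?groupV.
Qed.

Lemma in_galg_delta (K : {set gT}) x : x \in K -> in_galg K (gdelta x).
Proof. by move=> xK g gK; rewrite ffunE; case: eqP => // E; rewrite E xK in gK. Qed.

Lemma in_galgD (K : {set gT}) a b : in_galg K a -> in_galg K b -> in_galg K (a + b).
Proof. by move=> Ka Kb g gK; rewrite ffunE Ka ?Kb ?addr0. Qed.

Lemma in_galgZ (K : {set gT}) k a : in_galg K a -> in_galg K (k *: a).
Proof. by move=> Ka g gK; rewrite ffunE Ka ?scaler0. Qed.

Lemma in_galg_sum (K : {set gT}) I r (P : pred I) F :
  (forall i, P i -> in_galg K (F i)) -> in_galg K (\sum_(i <- r | P i) F i).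
Proof.
move=> KF; apply: (big_ind (in_galg K)) => //; last exact: in_galgD.
by move=> g _; rewrite ffunE.
Qed.

Lemma in_galgS (K K' : {set gT}) a : K \subset K' -> in_galg K a -> in_galg K' a.
Proof. by move=> sKK' Ka g gK; apply: Ka; apply: contra gK; exact: (subsetP sKK'). Qed.

Lemma galg_expand (K : {set gT}) a : in_galg K a -> a = \sum_(g in K) a g *: gdelta g.
Proof.
move=> Ka; apply/ffunP=> x; rewrite sum_galgE.
case xK: (x \in K).
  rewrite (bigD1 x) //= big1 => [|y /andP[_ yx]].
    by rewrite ffunE gdeltaE eqxx scaleCE mulr1 addr0.
  by rewrite ffunE gdeltaE eq_sym (negbTE yx) scaleCE mulr0.
rewrite Ka ?xK // big1 // => y yK; rewrite ffunE gdeltaE.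
by case: eqP => [E|]; [rewrite E yK in xK | rewrite scaleCE mulr0].
Qed.

Lemma comm_expand (K : {set gT}) a b : in_galg K a ->
  (forall g, g \in K -> gmul (gdelta g) b = gmul b (gdelta g)) -> gmul a b = gmul b a.
Proof.
move=> Ka E; rewrite {1 2}(galg_expand Ka) gmul_suml gmul_sumr.
by apply: eq_bigr => g gK; rewrite gmulZl gmulZr E.
Qed.

Lemma comm_abelian (K : {group gT}) a b : abelian K ->
  in_galg K a -> in_galg K b -> gmul a b = gmul b a.
Proof.
move=> abK Ka Kb; apply: (comm_expand Ka) => g gK.
symmetry; apply: (comm_expand Kb) => h hK.
by rewrite !gdeltaM (centsP abK).
Qed.

Lemma gconjE h a : gconj h a = [ffun g => a (h^-1 * g * h)%g].
Proof.
rewrite /gconj gmul_deltar gmul_deltal; apply/ffunP => g.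
by rewrite !ffunE invgK mulgA.
Qed.

Lemma gconj1 a : gconj 1%g a = a.
Proof. by rewrite gconjE; apply/ffunP=> g; rewrite ffunE invg1 mul1g mulg1. Qed.

Lemma gconjM x y a : gconj (x * y)%g a = gconj x (gconj y a).
Proof. by rewrite !gconjE; apply/ffunP=> g; rewrite !ffunE invMg !mulgA. Qed.

Lemma gconjZ h k a : gconj h (k *: a) = k *: gconj h a.
Proof. by rewrite /gconj gmulZr gmulZl. Qed.

Lemma gconj0 h : gconj h 0 = 0.
Proof. by rewrite /gconj gmul0r gmul0l. Qed.

Lemma gconjK h a : gconj h^-1%g (gconj h a) = a.
Proof. by rewrite -gconjM mulVg gconj1. Qed.

Lemma gconjVK h a : gconj h (gconj h^-1%g a) = a.
Proof. by rewrite -gconjM mulgV gconj1. Qed.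

Lemma gdeltaVK h a : gmul (gdelta h^-1%g) (gmul (gdelta h) a) = a.
Proof. by rewrite -gmulA gdeltaM mulVg gmul1l. Qed.

Lemma gconj_mul h a b : gconj h (gmul a b) = gmul (gconj h a) (gconj h b).
Proof. by rewrite /gconj !gmulA gdeltaVK. Qed.

Lemma gdelta_conj h a : gmul (gdelta h) a = gmul (gconj h a) (gdelta h).
Proof. by rewrite /gconj gmulA gdeltaM mulVg gmul1r. Qed.

Lemma gconj_in (K : {set gT}) h a : h \in 'N(K)%g -> in_galg K a -> in_galg K (gconj h a).
Proof.
move=> nKh Ka g gK; rewrite gconjE ffunE Ka //.
by rewrite -mulgA -/(conjg g h) memJ_norm.
Qed.

End GroupAlgebra.

Section PrimitiveIdempotents.
Variable gT : finGroupType.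
Implicit Types (a b : galg gT).

Definition prim_idem (K : {set gT}) a : Prop :=
  [/\ in_galg K a, gmul a a = a, a != 0 &
      forall z : galg gT, in_galg K z -> exists l : algC, gmul z a = l *: a].

Lemma eigenbasis_neq0 (K : {set gT}) B b : idem_eigenbasis K B -> b \in B -> b != 0.
Proof.
case=> _ _ [indep _] _ _ bB; apply/negP => /eqP b0.
have ib : (index b B < size B)%N by rewrite index_mem.
suff : ((Ordinal ib == Ordinal ib)%:R : algC) = 0 by rewrite eqxx => /eqP; rewrite oner_eq0.
apply: (indep (fun i => (i == Ordinal ib)%:R)).
rewrite (bigD1 (Ordinal ib)) //= big1 => [|i /negbTE ->]; last by rewrite scale0r.
by rewrite eqxx scale1r nth_index // b0 addr0.
Qed.

Lemma eigenbasis_prim (K : {set gT}) B b : idem_eigenbasis K B -> b \in B -> prim_idem K b.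
Proof.
move=> hB bB; have b0 := eigenbasis_neq0 hB bB.
by case: hB => _ suppB _ eigB [idemB _]; split; auto.
Qed.

Lemma scale_idem (l : algC) a : a != 0 -> l *: a = (l * l) *: a -> l = 0 \/ l = 1.
Proof.
move=> a0 E.
have : (l * l - l) *: a = 0 by rewrite scalerBl -E subrr.
move/eqP; rewrite scaler_eq0 (negbTE a0) orbF subr_eq0.
have [->|l0] := eqVneq l 0; first by left.
by rewrite -{3}(mulr1 l) (inj_eq (mulfI l0)) => /eqP ->; right.
Qed.

(* Distinct primitive idempotents of a commutative group algebra are
   orthogonal: a b is an idempotent which is both a scalar multiple of a
   and of b, with scalars in {0, 1}. *)
Lemma prim_idem_orth (K : {group gT}) a b : abelian K ->
  prim_idem K a -> prim_idem K b -> a != b -> gmul a b = 0.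
Proof.
move=> abK [Ka aa a0 ea] [Kb bb b0 eb] ab.
have [l El] := eb a Ka; have [m Em] := ea b Kb.
have Eab := comm_abelian abK Ka Kb.
have sq : gmul (gmul a b) (gmul a b) = gmul a b.
  by rewrite gmulA -(gmulA b) -Eab !gmulA -gmulA aa bb.
have : l *: b = (l * l) *: b by rewrite -El -{1}sq El gmulZl gmulZr bb scalerA.
case/(scale_idem b0) => l1; first by rewrite El l1 scale0r.
have : m *: a = (m * m) *: a.
  by rewrite -Em -Eab -{1}sq Eab Em gmulZl gmulZr aa scalerA.
case/(scale_idem a0) => m1.
  by move: b0; rewrite -[b]scale1r -l1 -El Eab Em m1 scale0r eqxx.
by move: ab; rewrite -[a]scale1r -m1 -Em -Eab El l1 scale1r eqxx.
Qed.

Lemma prim_idem_conj (K : {set gT}) h a :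
  h \in 'N(K)%g -> prim_idem K a -> prim_idem K (gconj h a).
Proof.
move=> nKh [Ka aa a0 ea]; split.
- exact: gconj_in.
- by rewrite -gconj_mul aa.
- by apply: contra a0 => /eqP E; rewrite -(gconjK h a) E gconj0.
move=> z Kz; have [l El] := ea _ (gconj_in (groupVr nKh) Kz).
by exists l; rewrite -{1}(gconjVK h z) -gconj_mul El gconjZ.
Qed.

End PrimitiveIdempotents.

Section MatrixUnits.
Variables (gT : finGroupType) (n : nat) (E : 'I_n -> 'I_n -> galg gT).

Hypothesis E_mul : forall i j k l, gmul (E i j) (E k l) = if j == k then E i l else 0.
Hypothesis E_diag_neq0 : forall i, E i i != 0.

Definition mx_comb (M : 'M[algC]_n) : galg gT := \sum_i \sum_j M i j *: E i j.

Definition mx_span (x : galg gT) : Prop := exists M, x = mx_comb M.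

(* The (i,j) coordinate of x, read off from E_ii x E_jj = x_ij E_ij at a
   point where E_ij does not vanish. *)
Definition mx_coords (x : galg gT) : 'M[algC]_n :=
  \matrix_(i, j) if [pick g | E i j g != 0] is Some g
                 then gmul (gmul (E i i) x) (E j j) g / E i j g else 0.

(* Off-diagonal units are nonzero as well, since E_ii = E_ij E_ji. *)
Lemma E_neq0 i j : E i j != 0.
Proof.
apply: contra (E_diag_neq0 i) => /eqP Eij0.
have -> : E i i = gmul (E i j) (E j i) by rewrite E_mul eqxx.
by rewrite Eij0 gmul0l.
Qed.

Lemma mx_comb_delta i j : mx_comb (delta_mx i j) = E i j.
Proof.
rewrite /mx_comb (bigD1 i) //= [X in _ + X]big1 ?addr0; last first.
  by move=> i' /negbTE ni; apply: big1 => j' _; rewrite mxE ni scale0r.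
rewrite (bigD1 j) //= big1 ?addr0; last by move=> j' /negbTE nj; rewrite mxE nj andbF scale0r.
by rewrite mxE !eqxx scale1r.
Qed.

Lemma mx_combD M M' : mx_comb (M + M') = mx_comb M + mx_comb M'.
Proof.
rewrite /mx_comb -big_split; apply: eq_bigr => i _.
by rewrite -big_split; apply: eq_bigr => j _; rewrite mxE scalerDl.
Qed.

Lemma mx_combZ k M : mx_comb (k *: M) = k *: mx_comb M.
Proof.
rewrite /mx_comb scaler_sumr; apply: eq_bigr => i _.
by rewrite scaler_sumr; apply: eq_bigr => j _; rewrite mxE scalerA.
Qed.

Lemma mul_E_comb i j M : gmul (E i j) (mx_comb M) = \sum_l M j l *: E i l.
Proof.
rewrite /mx_comb gmul_sumr (bigD1 j) //= [X in _ + X]big1 ?addr0; last first.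
  move=> k /negbTE nk; rewrite gmul_sumr big1 // => l _.
  by rewrite gmulZr E_mul eq_sym nk scaler0.
by rewrite gmul_sumr; apply: eq_bigr => l _; rewrite gmulZr E_mul eqxx.
Qed.

Lemma mx_comb_mul M M' : gmul (mx_comb M) (mx_comb M') = mx_comb (M *m M').
Proof.
rewrite {1}/mx_comb gmul_suml /mx_comb; apply: eq_bigr => i _.
rewrite gmul_suml.
under eq_bigr => j _ do rewrite gmulZl mul_E_comb scaler_sumr.
rewrite exchange_big /=; apply: eq_bigr => l _.
by rewrite mxE scaler_suml; apply: eq_bigr => j _; rewrite scalerA.
Qed.

Lemma mx_comb_corner i j M : gmul (gmul (E i i) (mx_comb M)) (E j j) = M i j *: E i j.
Proof.
rewrite mul_E_comb gmul_suml (bigD1 j) //= [X in _ + X]big1 ?addr0; last first.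
  by move=> l /negbTE nl; rewrite gmulZl E_mul nl scaler0.
by rewrite gmulZl E_mul eqxx.
Qed.

Lemma mx_combK M : mx_coords (mx_comb M) = M.
Proof.
apply/matrixP => i j; rewrite mxE mx_comb_corner; case: pickP => [g gnz | E0].
  by rewrite ffunE scaleCE mulfK.
exfalso; move/negP: (E_neq0 i j); apply; apply/eqP/ffunP => g.
by move: (E0 g) => /= /negbFE /eqP ->; rewrite ffunE.
Qed.

Lemma mx_comb1 : mx_comb 1%:M = \sum_i E i i.
Proof.
apply: eq_bigr => i _; rewrite (bigD1 i) //= big1 ?addr0; first by rewrite mxE eqxx scale1r.
by move=> j nj; rewrite mxE eq_sym (negbTE nj) scale0r.
Qed.

Lemma mx_span0 : mx_span 0.
Proof. by exists 0; rewrite -[0 : 'M_n](scale0r 0) mx_combZ scale0r. Qed.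

Lemma mx_spanD x y : mx_span x -> mx_span y -> mx_span (x + y).
Proof. by move=> [M ->] [M' ->]; exists (M + M'); rewrite mx_combD. Qed.

Lemma mx_spanZ k x : mx_span x -> mx_span (k *: x).
Proof. by move=> [M ->]; exists (k *: M); rewrite mx_combZ. Qed.

End MatrixUnits.

Section SemidirectBlock.
Variables (gT : finGroupType) (G N H : {group gT}).
Hypotheses (hsd : (N ><| H)%g = G) (abN : abelian N) (abH : abelian H).
Variable v1 : galg gT.
Hypothesis v1_prim : prim_idem N v1.
Variable Ha : {set gT}.
Hypothesis hHa : Ha = [set h in H | gconj h v1 == v1].
Variable u : galg gT.
Hypothesis u_prim : prim_idem Ha u.
Variable hr : 'I_#|H : Ha|%g -> gT.
Hypotheses (hrH : forall i, hr i \in H) (hrcos : injective (fun i => (Ha :* hr i)%g)).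

Local Notation c := #|H : Ha|%g.

Lemma commH x y : x \in H -> y \in H -> (x * y = y * x)%g.
Proof. by move=> xH yH; apply: (centsP abH). Qed.

Lemma memHa h : (h \in Ha) = (h \in H) && (gconj h v1 == v1).
Proof. by rewrite hHa inE. Qed.

Lemma sHaH : Ha \subset H.
Proof. by apply/subsetP => x; rewrite memHa => /andP[]. Qed.

Lemma Ha_group : group_set Ha.
Proof.
apply/group_setP; split; first by rewrite memHa group1 gconj1 eqxx.
move=> x y; rewrite !memHa => /andP[xH /eqP ex] /andP[yH /eqP ey].
by rewrite groupM // gconjM ey ex eqxx.
Qed.

Canonical Ha_groupType := Group Ha_group.

Lemma deltaHa_v1 s : s \in Ha -> gmul (gdelta s) v1 = gmul v1 (gdelta s).
Proof. by rewrite memHa => /andP[_ /eqP fix_s]; rewrite gdelta_conj fix_s. Qed.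

Lemma u_v1 : gmul u v1 = gmul v1 u.
Proof. by case: u_prim => Hau _ _ _; apply: (comm_expand Hau); exact: deltaHa_v1. Qed.

Lemma u_delta h : h \in H -> gmul u (gdelta h) = gmul (gdelta h) u.
Proof.
case: u_prim => Hau _ _ _ hH; apply: (comm_expand Hau) => s sHa.
by rewrite !gdeltaM commH // (subsetP sHaH).
Qed.

Lemma u_conj h : h \in H -> gconj h u = u.
Proof. by move=> hH; rewrite /gconj -u_delta // gmulA gdeltaM mulgV gmul1r. Qed.

(* The element w = v1 u; the paper's w_i is its conjugate by h_i.  It is
   locked so that rewriting with associativity treats it as an atom. *)
Definition w : galg gT := locked (gmul v1 u).

Lemma wE : w = gmul v1 u.
Proof. by rewrite /w -lock. Qed.

Lemma w_idem : gmul w w = w.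
Proof.
case: v1_prim => _ vv _ _; case: u_prim => _ uu _ _.
by rewrite wE gmulA -(gmulA u v1 u) u_v1 (gmulA v1 u u) uu -gmulA vv.
Qed.

(* w is nonzero: since N and H meet trivially, w takes the value
   v1(n) u(s) at n s, for any n in N and s in H_a. *)
Lemma w_neq0 : w != 0.
Proof.
case: v1_prim => Nv _ v0 _; case: u_prim => Hau _ u0 _.
have [_ _ _ tiNH] := sdprodP hsd.
have [n vn] := galg_neq0 v0; have [s us] := galg_neq0 u0.
have nN : n \in N by apply: contraR vn => /Nv ->.
have sHa : s \in Ha by apply: contraR us => /Hau ->.
apply/negP => /eqP w0.
have : w (n * s)%g = 0 by rewrite w0 ffunE.
rewrite wE gmulE (bigD1 n) //= big1 ?addr0 => [|x /negbTE xn]; last first.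
  case xN: (x \in N); last by rewrite Nv ?xN ?mul0r.
  rewrite Hau ?mulr0 //; apply: contraFN xn => xnsHa.
  have : (x^-1 * n)%g \in N :&: H.
    rewrite inE groupM ?groupV //= -[X in X \in H](mulgK s) -(mulgA x^-1%g).
    by rewrite groupM ?groupV // (subsetP sHaH).
  by rewrite tiNH inE -eq_mulVg1.
by rewrite mulKg => /eqP; rewrite mulf_eq0 (negbTE vn) (negbTE us).
Qed.

(* Key orthogonality: for h in H outside H_a, the primitive idempotent
   h v1 h^-1 of C[N] differs from v1, so w h w = 0. *)
Lemma w_delta_w h : h \in H -> h \notin Ha -> gmul (gmul w (gdelta h)) w = 0.
Proof.
move=> hH hHa'; have [_ _ nNH _] := sdprodP hsd.
case: u_prim => _ uu _ _.
have -> : gmul (gmul w (gdelta h)) w = gmul (gmul v1 (gmul (gdelta h) v1)) (gmul u u).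
  rewrite wE !gmulA -(gmulA u (gdelta h)) u_delta // !gmulA.
  by rewrite -(gmulA u v1) u_v1 !gmulA.
rewrite gdelta_conj -(gmulA v1) (prim_idem_orth abN v1_prim) ?gmul0l //.
  exact: prim_idem_conj (subsetP nNH h hH) v1_prim.
by apply: contra hHa' => /eqP E; rewrite memHa hH -E eqxx.
Qed.

Definition mxunit (i j : 'I_c) : galg gT :=
  gmul (gmul (gdelta (hr i)) w) (gdelta (hr j)^-1%g).

Lemma hr_notin (j k : 'I_c) : j != k -> ((hr j)^-1 * hr k)%g \notin Ha.
Proof.
apply: contra => hjk; apply/eqP; apply: hrcos => /=.
have : hr k \in (Ha :* hr j)%g.
  apply/rcosetP; exists ((hr j)^-1 * hr k)%g => //.
  by rewrite commH ?hrH ?mulKVg // (subsetP sHaH).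
by move/rcoset_eqP => ->.
Qed.

Lemma mxunit_mul i j k l :
  gmul (mxunit i j) (mxunit k l) = if j == k then mxunit i l else 0.
Proof.
rewrite /mxunit !gmulA gdeltaMA.
case: eqP => [->|/eqP jk].
  by rewrite mulVg gmul1l -(gmulA w w) w_idem.
have -> : forall x y, gmul w (gmul (gdelta x) (gmul w y)) = gmul (gmul (gmul w (gdelta x)) w) y.
  by move=> x y; rewrite !gmulA.
by rewrite w_delta_w ?gmul0l ?gmul0r ?hr_notin // groupM ?groupV.
Qed.

(* e_ii = h_i w h_i^-1 is a conjugate of w, hence nonzero. *)
Lemma mxunit_diag_neq0 i : mxunit i i != 0.
Proof.
apply: contra w_neq0 => /eqP e0.
by rewrite -(gconjK (hr i) w) -[gconj _ w]/(mxunit i i) e0 gconj0.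
Qed.

Lemma paper_w i : gmul (gconj (hr i) v1) u = mxunit i i.
Proof. by rewrite -{1}(u_conj (hrH i)) -gconj_mul -wE. Qed.

Lemma paper_e i j :
  gmul (gmul (gmul (gconj (hr i) v1) u) (gdelta (hr i * (hr j)^-1)%g))
       (gmul (gconj (hr j) v1) u) = mxunit i j.
Proof.
rewrite !paper_w /mxunit !gmulA !gdeltaMA.
have -> : ((hr i)^-1 * (hr i * (hr j)^-1) * hr j = 1)%g by rewrite mulKg mulVg.
by rewrite gmul1l -(gmulA w w) w_idem.
Qed.

(* The line through w is stable under N H_a: n in N acts on v1 and s in H_a
   on u by scalars, and s commutes with v1. *)
Lemma delta_w n s : n \in N -> s \in Ha -> exists m : algC, gmul (gdelta (n * s)%g) w = m *: w.
Proof.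
move=> nN sHa; case: v1_prim => _ _ _ ev; case: u_prim => _ _ _ eu.
have [la Ela] := ev _ (in_galg_delta nN); have [mu Emu] := eu _ (in_galg_delta sHa).
exists (la * mu); rewrite wE -gdeltaM gmulA -(gmulA (gdelta s)) deltaHa_v1 //.
by rewrite gmulA Emu !gmulZr -gmulA Ela gmulZl scalerA mulrC.
Qed.

Lemma coset_cover h : h \in H -> exists k : 'I_c, h \in (Ha :* hr k)%g.
Proof.
move=> hH.
have cosE : [set (Ha :* hr i)%g | i : 'I_c] = rcosets Ha H.
  apply/eqP; rewrite eqEcard (card_imset _ hrcos) card_ord leqnn andbT.
  by apply/subsetP => X /imsetP[i _ ->]; rewrite mem_rcosets mulSGid ?hrH // sHaH.
have : (Ha :* h)%g \in rcosets Ha H by rewrite mem_rcosets mulSGid ?sHaH.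
by rewrite -cosE => /imsetP[k _ Ek]; exists k; rewrite -Ek rcoset_refl.
Qed.

(* Left multiplication by g in G sends e_ii to a multiple of some e_ki:
   writing g = n h and h h_i = s h_k gives g h_i = h_k (n^(h_k) s). *)
Lemma delta_mxunit g i : g \in G -> exists (k : 'I_c) (m : algC),
  gmul (gdelta g) (mxunit i i) = m *: mxunit k i.
Proof.
have [_ defG nNH _] := sdprodP hsd.
rewrite -defG => /mulsgP[n h nN hH ->].
have [k /rcosetP[s sHa Eh]] := coset_cover (groupM hH (hrH i)).
have nkN : (n ^ hr k)%g \in N by rewrite memJ_norm // (subsetP nNH) // hrH.
have Eg : (n * h * hr i = hr k * ((n ^ hr k) * s))%g.
  by rewrite -mulgA Eh commH ?hrH ?(subsetP sHaH) // /conjg !mulgA mulgV mul1g.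
have [m Em] := delta_w nkN sHa.
exists k, m; rewrite /mxunit !gmulA gdeltaMA Eg -gdeltaMA -(gmulA (gdelta _) w) Em.
by rewrite gmulZl gmulZr.
Qed.

Lemma mxunit_G i j : in_galg G (mxunit i j).
Proof.
have [_ defG _ _] := sdprodP hsd.
have sNG : N \subset G by rewrite -defG mulG_subl.
have sHG : H \subset G by rewrite -defG mulG_subr.
case: v1_prim => Nv _ _ _; case: u_prim => Hau _ _ _.
rewrite /mxunit wE; apply: in_galg_mul; last first.
  by apply: in_galg_delta; rewrite groupV (subsetP sHG) ?hrH.
apply: in_galg_mul; first by apply: in_galg_delta; rewrite (subsetP sHG) ?hrH.
apply: in_galg_mul; first exact: (in_galgS sNG).
by apply: (in_galgS _ Hau); apply: subset_trans sHaH sHG.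
Qed.

Lemma block_span x :
  (exists y, in_galg G y /\ x = gmul y (\sum_i mxunit i i)) <-> mx_span mxunit x.
Proof.
split=> [[y [Gy ->]] | [M ->]]; last first.
  exists (mx_comb mxunit M); split.
    by apply: in_galg_sum => i _; apply: in_galg_sum => j _; apply/in_galgZ/mxunit_G.
  by rewrite -mx_comb1 (mx_comb_mul mxunit_mul) mulmx1.
rewrite (galg_expand Gy) gmul_suml.
apply: (big_ind (mx_span mxunit)); [exact: mx_span0 | exact: mx_spanD | move=> g gG].
rewrite gmulZl gmul_sumr; apply: mx_spanZ.
apply: (big_ind (mx_span mxunit)); [exact: mx_span0 | exact: mx_spanD | move=> i _].
have [k [m ->]] := delta_mxunit i gG.
by apply: mx_spanZ; exists (delta_mx k i); rewrite mx_comb_delta.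
Qed.

End SemidirectBlock.

Theorem mainTheorem11 (gT : finGroupType) (G N H : {group gT})
  (hsd : (N ><| H)%g = G) (abN : abelian N) (abH : abelian H)
  (PN : seq (galg gT)) (hPN : idem_eigenbasis N PN)
  (v1 : galg gT) (hv1 : v1 \in PN)
  (Ha : {set gT}) (hHa : Ha = [set h in H | gconj h v1 == v1])
  (PHa : seq (galg gT)) (hPHa : idem_eigenbasis Ha PHa)
  (u : galg gT) (hu : u \in PHa)
  (hr : 'I_#|H : Ha|%g -> gT)
  (hrH : forall i, hr i \in H)
  (hrcos : injective (fun i => (Ha :* hr i)%g)) :
  let c := #|H : Ha|%g in
  let v := fun i : 'I_c => gconj (hr i) v1 in
  let w := fun i : 'I_c => gmul (v i) u in
  let e := fun i j : 'I_c =>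
     gmul (gmul (w i) (gdelta (hr i * (hr j)^-1)%g)) (w j) in
  let J := \sum_(i < c) w i in
  let A := fun x : galg gT => exists y, in_galg G y /\ x = gmul y J in
  [/\ forall i j k : 'I_c, gmul (e i j) (e j k) = e i k,
      forall i j k l : 'I_c, j != k -> gmul (e i j) (e k l) = 0
    & exists phi : galg gT -> 'M[algC]_c,
      [/\ forall i j, A (e i j),
          forall (a : algC) x y, A x -> A y -> phi (a *: x + y) = a *: phi x + phi y,
          forall x y, A x -> A y -> phi (gmul x y) = phi x *m phi y,
          (forall x y, A x -> A y -> phi x = phi y -> x = y) /\
          (forall M, exists x, A x /\ phi x = M)
        & forall i j, phi (e i j) = delta_mx i j]].
Proof.
move=> c v w e J A.
have v1_prim := eigenbasis_prim hPN hv1.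
have u_prim := eigenbasis_prim hPHa hu.
pose E := mxunit v1 u hr.
have E_mul := mxunit_mul hsd abN abH v1_prim hHa u_prim hrH hrcos.
have E_nz := mxunit_diag_neq0 hsd v1_prim hHa u_prim hr.
have coordsK := mx_combK E_mul E_nz.
have eE i j : e i j = E i j := paper_e abH v1_prim hHa u_prim hrH i j.
have JE : J = \sum_i E i i.
  by apply: eq_bigr => i _; exact: (paper_w abH hHa u_prim hrH i).
have AE x : A x <-> mx_span E x.
  by rewrite /A JE; exact: (block_span hsd abN abH v1_prim hHa u_prim hrH hrcos).
split=> [i j k | i j k l jk | ]; rewrite ?eE ?E_mul ?eqxx ?(negbTE jk) //.
exists (mx_coords E); split.
- by move=> i j; apply/AE; exists (delta_mx i j); rewrite eE mx_comb_delta.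
- by move=> a x y /AE[M ->] /AE[M' ->]; rewrite -mx_combZ -mx_combD !coordsK.
- by move=> x y /AE[M ->] /AE[M' ->]; rewrite (mx_comb_mul E_mul) !coordsK.
- split; first by move=> x y /AE[M ->] /AE[M' ->]; rewrite !coordsK => ->.
  by move=> M; exists (mx_comb E M); split; [apply/AE; exists M | exact: coordsK].
- by move=> i j; rewrite eE -mx_comb_delta coordsK.
Qed.
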